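(* Let $\mathcal D=\{d_1,\dots,d_s\}$ and $\mathcal H=\{h_1,\dots,h_n\}$ be finite sets, where each hypothesis $h_i$ is a probability distribution $\mathbb P[\cdot\mid h_i]$ on $\mathcal D$, the hypotheses $h_1,\dots,h_n$ are pairwise distinct as distributions, and the prior $\bm p=(p_1,\dots,p_n)$ on $\mathcal H$ satisfies $p_i>0$ for all $i$. Consider chained iterated learning with initial hypothesis $\bm h_{\mathrm{init}}=h_1$ and sample sizes $m_1,m_2,\dots$. Let ${\tt d}_1=\min_{j\neq 1} d_{RS}(\mathbb P[\cdot\mid h_1],\mathbb P[\cdot\mid h_j])$. Then for any $0<\varepsilon<1$, the sample size sequence $$m_t=\frac{4}{{\tt d}_1^2}\ln\frac{nt}{\varepsilon\,p_1}=\frac{4}{{\tt d}_1^2}\Bigl(\ln\frac{t}{\varepsilon}+C\Bigr),\qquad C=\ln\frac{n}{p_1},$$ makes iterated learning $\varepsilon$-self-sustaining; that is, for every $t\ge 1$, the posterior $\bm h^t$ of learner $t$ satisfies $\bm h^t_1\ge 1-\varepsilon$.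
   Context: Root-sine distance: for probability vectors $\bm a,\bm b$ on $\mathcal D$, $d_{RS}(\bm a,\bm b)=\sqrt{1-\bigl(\sum_{i=1}^s\sqrt{a_ib_i}\bigr)^2}$. Chained iterated learning: for $\mathbf d=(x_1,\dots,x_m)\in\mathcal D^m$ let $\mathbb P[\mathbf d\mid h]=\prod_{k=1}^m\mathbb P[x_k\mid h]$ and Bayesian posterior $\mathbb P[h_j\mid\mathbf d]=\mathbb P[\mathbf d\mid h_j]p_j/\sum_{k=1}^n\mathbb P[\mathbf d\mid h_k]p_k$. Learner $t\ge1$ picks a hypothesis $h_i$ from the posterior of learner $t-1$ (for $t=1$, from $\bm h_{\mathrm{init}}$), draws $m_t$ i.i.d. samples $\mathbf d\in\mathcal D^{m_t}$ from $h_i$, and forms the posterior $\mathbb P[\cdot\mid\mathbf d]$. The transition probabilities are $P^{|t}_{ij}=\sum_{\mathbf d\in\mathcal D^{m_t}}\mathbb P[h_j\mid\mathbf d]\,\mathbb P[\mathbf d\mid h_i]$, and the (marginal) posterior of learner $t$ is the row vector $\bm h^t=\bm h^{t-1}P^{|t}$ with $\bm h^0=(1,0,\dots,0)$ (the point mass at $h_1$). Iterated learning is $\varepsilon$-self-sustaining if for every learner $t$, a random hypothesis drawn from $\bm h^t$ equals $\bm h_{\mathrm{init}}$ with probability at least $1-\varepsilon$. *)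

From HB Require Import structures.
From mathcomp Require Import all_boot all_order all_algebra.
From mathcomp Require Import reals exp.
Set Implicit Arguments. Unset Strict Implicit. Unset Printing Implicit Defensive.
Import Order.TTheory GRing.Theory Num.Theory.
Local Open Scope ring_scope.

Section IL.
Variables (R : realType) (n s : nat).

Definition dRS (a b : 'I_s -> R) : R :=
  Num.sqrt (1 - (\sum_(i < s) Num.sqrt (a i * b i)) ^+ 2).

(* hypotheses: h i x = P[x | h_i];  prior p *)
Variables (h : 'I_n -> 'I_s -> R) (p : 'I_n -> R).

Definition lik (m : nat) (i : 'I_n) (d : {ffun 'I_m -> 'I_s}) : R :=
  \prod_(k < m) h i (d k).

Definition post (m : nat) (d : {ffun 'I_m -> 'I_s}) (j : 'I_n) : R :=
  lik j d * p j / \sum_(k < n) lik k d * p k.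

Definition trans (m : nat) (i j : 'I_n) : R :=
  \sum_(d : {ffun 'I_m -> 'I_s}) post d j * lik i d.

Fixpoint hvec (msz : nat -> nat) (i0 : 'I_n) (t : nat) : 'I_n -> R :=
  match t with
  | 0 => fun j => (j == i0)%:R
  | t'.+1 => fun j => \sum_(i < n) hvec msz i0 t' i * trans (msz t'.+1) i j
  end.

(* d_1 = min_{j <> i0} d_RS(h_{i0}, h_j); since d_RS <= 1 the neutral element 1
   is harmless (and the index set is nonempty when n >= 2). *)
Definition dmin (i0 : 'I_n) : R :=
  \big[Num.min/1]_(j < n | j != i0) dRS (h i0) (h j).

End IL.

Definition msize (R : realType) (n : nat) (d eps p1 : R) (t : nat) : nat :=
  `| Num.ceil (4 / d ^+ 2 * ln (n%:R * t%:R / (eps * p1))) |%N.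

From HB Require Import structures.
From mathcomp Require Import all_boot all_order all_algebra.
From mathcomp Require Import reals exp sequences.
From mathcomp Require Import ring lra.
Set Implicit Arguments. Unset Strict Implicit. Unset Printing Implicit Defensive.
Import Order.TTheory GRing.Theory Num.Theory.
Local Open Scope ring_scope.

(* Learner t keeps h_{i0} with probability at least the product of the
   diagonal transition probabilities P^{|k}_{i0 i0}, k <= t.  A learner fed m
   samples of h_{i0} moves to h_j with probability at most BC(h_{i0}, h_j)^m / p_{i0},
   where BC is the Bhattacharyya coefficient, because the posterior weight of
   h_j is dominated by the geometric mean of the two likelihoods.  As
   BC <= exp (-d_RS^2 / 2), the sample size m_k keeps the loss at step k below
   eps / (k (k + 1)); these losses telescope to less than eps, and the
   Weierstrass product inequality 1 - sum a_k <= prod (1 - a_k) concludes. *)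

Lemma prod_1B_ge (R : realDomainType) (I : Type) (r : seq I) (P : pred I) (a : I -> R) :
  (forall k, P k -> 0 <= a k <= 1) ->
  1 - \sum_(k <- r | P k) a k <= \prod_(k <- r | P k) (1 - a k).
Proof.
move=> a01; elim: r => [|k r IHr]; first by rewrite !big_nil subr0.
rewrite !big_cons; case: ifP => // Pk.
have /andP[a0 a1] := a01 k Pk.
have S0 : 0 <= \sum_(j <- r | P j) a j by apply: sumr_ge0 => j /a01 /andP[].
apply: le_trans (ler_wpM2l _ IHr); last by rewrite subr_ge0.
nra.
Qed.

Lemma sqrtr_prod (R : rcfType) (I : Type) (r : seq I) (P : pred I) (F : I -> R) :
  (forall i, P i -> 0 <= F i) ->
  Num.sqrt (\prod_(i <- r | P i) F i) = \prod_(i <- r | P i) Num.sqrt (F i).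
Proof.
move=> F0; elim: r => [|i r IHr]; first by rewrite !big_nil sqrtr1.
rewrite !big_cons; case: ifP => // Pi.
by rewrite sqrtrM ?F0 // IHr.
Qed.

Lemma mulr_div_le_sqrt (R : rcfType) (a b z : R) :
  0 <= a -> 0 <= b -> a <= z -> b <= z -> a * b / z <= Num.sqrt (a * b).
Proof.
move=> a0 b0 az bz.
have [->|z0] := eqVneq z 0; first by rewrite invr0 mulr0 sqrtr_ge0.
have zpos : 0 < z by rewrite lt_neqAle eq_sym z0 (le_trans a0 az).
have sqrt_le : Num.sqrt (a * b) <= z.
  by rewrite -(ger0_norm (ltW zpos)) -sqrtr_sqr ler_sqrt ?sqr_ge0 // expr2 ler_pM.
rewrite ler_pdivrMr // -{1}(sqr_sqrtr (mulr_ge0 a0 b0)) expr2.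
by rewrite ler_wpM2l ?sqrtr_ge0.
Qed.

Lemma sum_ffun_prod (R : comNzSemiRingType) (m s : nat) (F : 'I_s -> R) :
  \sum_(d : {ffun 'I_m -> 'I_s}) \prod_(k < m) F (d k) = (\sum_(x < s) F x) ^+ m.
Proof.
have := bigA_distr_bigA (fun (k : 'I_m) (x : 'I_s) => F x) => /= <-.
by rewrite prodr_const card_ord.
Qed.

Lemma le1_of_sum1 (R : numDomainType) (I : finType) (q : I -> R) (i : I) :
  (forall j, 0 <= q j) -> \sum_j q j = 1 -> q i <= 1.
Proof. by move=> q0 <-; rewrite (bigD1 i) //= lerDl sumr_ge0. Qed.

Section Bhattacharyya.
Variables (R : realType) (s : nat).

Definition bhatt (a b : 'I_s -> R) : R := \sum_(x < s) Num.sqrt (a x * b x).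

Lemma bhatt_ge0 a b : 0 <= bhatt a b.
Proof. by apply: sumr_ge0 => x _; exact: sqrtr_ge0. Qed.

Variables (a b : 'I_s -> R).
Hypotheses (a_ge0 : forall x, 0 <= a x) (b_ge0 : forall x, 0 <= b x).
Hypotheses (a_sum1 : \sum_(x < s) a x = 1) (b_sum1 : \sum_(x < s) b x = 1).

Lemma sum_sqr_sqrtB :
  \sum_(x < s) (Num.sqrt (a x) - Num.sqrt (b x)) ^+ 2 = 2 * (1 - bhatt a b).
Proof.
have -> : 2 * (1 - bhatt a b) = \sum_(x < s) (a x + b x - 2 * Num.sqrt (a x * b x)).
  by rewrite sumrB big_split /= a_sum1 b_sum1 -mulr_sumr /bhatt; ring.
apply: eq_bigr => x _.
by rewrite sqrrB !sqr_sqrtr // sqrtrM //; ring.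
Qed.

Lemma bhatt_le1 : bhatt a b <= 1.
Proof.
have : 0 <= 2 * (1 - bhatt a b).
  by rewrite -sum_sqr_sqrtB; apply: sumr_ge0 => x _; exact: sqr_ge0.
lra.
Qed.

Lemma bhatt_lt1 : (exists x, a x != b x) -> bhatt a b < 1.
Proof.
move=> [x abx]; rewrite lt_neqAle bhatt_le1 andbT; apply/eqP => bhatt1.
have sum0 : \sum_(y < s) (Num.sqrt (a y) - Num.sqrt (b y)) ^+ 2 = 0.
  by rewrite sum_sqr_sqrtB bhatt1 subrr mulr0.
have /eqP := @psumr_eq0P _ _ xpredT _ (fun y _ => sqr_ge0 _) sum0 x isT.
rewrite sqrf_eq0 subr_eq0 => /eqP sqrt_eq.
by move: abx; rewrite -(sqr_sqrtr (a_ge0 x)) -(sqr_sqrtr (b_ge0 x)) sqrt_eq eqxx.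
Qed.

Lemma dRS_sqr : dRS a b ^+ 2 = 1 - bhatt a b ^+ 2.
Proof.
rewrite /dRS -/(bhatt a b) sqr_sqrtr // subr_ge0 exprn_ile1 ?bhatt_ge0 //.
exact: bhatt_le1.
Qed.

Lemma dRS_gt0 : (exists x, a x != b x) -> 0 < dRS a b.
Proof.
move=> /bhatt_lt1 lt1; rewrite /dRS -/(bhatt a b) sqrtr_gt0 subr_gt0.
by rewrite exprn_ilt1 ?bhatt_ge0.
Qed.

Lemma bhatt_le_expR d : 0 <= d -> d <= dRS a b -> bhatt a b <= expR (- d ^+ 2 / 2).
Proof.
move=> d0 d_le.
have sqr_le : bhatt a b ^+ 2 <= expR (- d ^+ 2 / 2) ^+ 2.
  rewrite -expRM_natl (_ : 2%:R * (- d ^+ 2 / 2) = - d ^+ 2); last by field.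
  apply: le_trans (expR_ge1Dx _).
  have : d ^+ 2 <= dRS a b ^+ 2 by rewrite ler_pXn2r ?nnegrE ?sqrtr_ge0.
  have := dRS_sqr.
  lra.
by rewrite -(ler_pXn2r (isT : (0 < 2)%N)) ?nnegrE ?bhatt_ge0 ?expR_ge0.
Qed.

End Bhattacharyya.

Section Posterior.
Variables (R : realType) (n s : nat) (h : 'I_n -> 'I_s -> R) (p : 'I_n -> R).
Hypothesis h_ge0 : forall i x, 0 <= h i x.
Hypothesis h_sum1 : forall i, \sum_(x < s) h i x = 1.
Hypothesis p_gt0 : forall i, 0 < p i.
Hypothesis p_sum1 : \sum_(i < n) p i = 1.

Definition evidence m (d : {ffun 'I_m -> 'I_s}) : R := \sum_(k < n) lik h k d * p k.

Lemma p_le1 i : p i <= 1.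
Proof. by apply: le1_of_sum1 => // j; exact: ltW. Qed.

Lemma lik_ge0 m i (d : {ffun 'I_m -> 'I_s}) : 0 <= lik h i d.
Proof. exact: prodr_ge0. Qed.

Lemma sum_lik m i : \sum_(d : {ffun 'I_m -> 'I_s}) lik h i d = 1.
Proof. by rewrite /lik sum_ffun_prod h_sum1 expr1n. Qed.

Lemma lik_p_le_evidence m (d : {ffun 'I_m -> 'I_s}) i : lik h i d * p i <= evidence d.
Proof.
rewrite /evidence (bigD1 i) //= lerDl; apply: sumr_ge0 => j _.
by rewrite mulr_ge0 ?lik_ge0 ?ltW.
Qed.

Lemma evidence_ge0 m (d : {ffun 'I_m -> 'I_s}) : 0 <= evidence d.
Proof.
by apply: sumr_ge0 => k _; rewrite mulr_ge0 ?lik_ge0 ?ltW.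
Qed.

Lemma post_ge0 m (d : {ffun 'I_m -> 'I_s}) j : 0 <= post h p d j.
Proof. by rewrite divr_ge0 ?evidence_ge0 ?mulr_ge0 ?lik_ge0 ?ltW. Qed.

Lemma lik_mul_1B_post m (d : {ffun 'I_m -> 'I_s}) i :
  lik h i d * (1 - post h p d i) = \sum_(j < n | j != i) lik h i d * post h p d j.
Proof.
rewrite -mulr_sumr.
have [Z0|Zn0] := eqVneq (evidence d) 0.
  have : lik h i d * p i <= 0 by rewrite -Z0 lik_p_le_evidence.
  rewrite pmulr_lle0 // => lik_le0.
  by rewrite (@le_anti _ _ (lik h i d) 0) ?lik_le0 ?lik_ge0 // !mul0r.
have sum_post : \sum_(j < n) post h p d j = 1 by rewrite -mulr_suml divff.
by rewrite -sum_post (bigD1 i) //=; ring.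
Qed.

Lemma lik_mul_post_le m (d : {ffun 'I_m -> 'I_s}) i j :
  lik h i d * post h p d j <= Num.sqrt (lik h i d * lik h j d) / p i.
Proof.
have pi0 : p i != 0 by rewrite gt_eqF.
have -> : lik h i d * post h p d j
    = (lik h i d * p i) * (lik h j d * p j) / evidence d / p i.
  by rewrite /post -/(evidence d) -{1}(mulfK pi0 (lik h i d)); ring.
rewrite ler_pM2r ?invr_gt0 //.
apply: le_trans (mulr_div_le_sqrt _ _ (lik_p_le_evidence d i) (lik_p_le_evidence d j)) _;
  try by rewrite mulr_ge0 ?lik_ge0 ?ltW.
rewrite ler_sqrt ?mulr_ge0 ?lik_ge0 // mulrACA ler_piMr ?mulr_ge0 ?lik_ge0 //.
by rewrite mulr_ile1 ?p_le1 ?ltW.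
Qed.

Lemma sum_sqrt_lik m i j :
  \sum_(d : {ffun 'I_m -> 'I_s}) Num.sqrt (lik h i d * lik h j d) = bhatt (h i) (h j) ^+ m.
Proof.
rewrite /bhatt -sum_ffun_prod; apply: eq_bigr => d _.
by rewrite /lik -big_split sqrtr_prod // => k _; rewrite mulr_ge0.
Qed.

Lemma one_sub_trans_le m i :
  1 - trans h p m i i <= \sum_(j < n | j != i) bhatt (h i) (h j) ^+ m / p i.
Proof.
have -> : 1 - trans h p m i i
    = \sum_(d : {ffun 'I_m -> 'I_s}) lik h i d * (1 - post h p d i).
  by rewrite -{1}(sum_lik m i) /trans -sumrB; apply: eq_bigr => d _; ring.
under eq_bigr do rewrite lik_mul_1B_post.
rewrite exchange_big /=; apply: ler_sum => j _.
rewrite -sum_sqrt_lik mulr_suml; apply: ler_sum => d _.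
exact: lik_mul_post_le.
Qed.

Lemma trans_ge0 m i j : 0 <= trans h p m i j.
Proof. by apply: sumr_ge0 => d _; rewrite mulr_ge0 ?post_ge0 ?lik_ge0. Qed.

Lemma hvec_ge0 msz i0 t j : 0 <= hvec h p msz i0 t j.
Proof.
elim: t j => [|t IHt] j /=; first exact: ler0n.
by apply: sumr_ge0 => i _; rewrite mulr_ge0 ?trans_ge0.
Qed.

Lemma hvec_ge_prod msz i0 t :
  \prod_(k < t) trans h p (msz k.+1) i0 i0 <= hvec h p msz i0 t i0.
Proof.
elim: t => [|t IHt]; first by rewrite big_ord0 /= eqxx.
rewrite big_ord_recr /= (bigD1 i0) //= -[X in X <= _]addr0.
apply: lerD; last by apply: sumr_ge0 => i _; rewrite mulr_ge0 ?hvec_ge0 ?trans_ge0.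
by rewrite ler_wpM2r ?trans_ge0.
Qed.

Lemma dmin_le i0 j : j != i0 -> dmin h i0 <= dRS (h i0) (h j).
Proof. by move=> ji; rewrite /dmin (bigD1 j) //= ge_min lexx. Qed.

Lemma dmin_gt0 i0 : (forall j, j != i0 -> exists x, h i0 x != h j x) -> 0 < dmin h i0.
Proof.
move=> h_sep; apply: (big_ind (fun x => 0 < x)) => //.
  by move=> x y x_gt0 y_gt0; rewrite lt_min x_gt0 y_gt0.
by move=> j /h_sep; exact: dRS_gt0.
Qed.

Lemma one_sub_trans_le_dmin m i0 : (forall j, j != i0 -> exists x, h i0 x != h j x) ->
  1 - trans h p m i0 i0 <= n%:R * expR (- dmin h i0 ^+ 2 / 2) ^+ m / p i0.
Proof.
move=> h_sep; apply: le_trans (one_sub_trans_le m i0) _.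
set E := expR _.
have E_ge0 : 0 <= E ^+ m / p i0 by rewrite divr_ge0 ?exprn_ge0 ?expR_ge0 ?ltW.
apply: le_trans (_ : \sum_(j < n | j != i0) E ^+ m / p i0 <= _).
  apply: ler_sum => j ji; rewrite ler_wpM2r ?invr_ge0 ?(ltW (p_gt0 i0)) //.
  apply: lerXn2r; rewrite ?nnegrE ?bhatt_ge0 ?expR_ge0 //.
  exact: bhatt_le_expR (ltW (dmin_gt0 h_sep)) (dmin_le ji).
apply: le_trans (_ : \sum_(j < n) E ^+ m / p i0 <= _).
  by rewrite [X in _ <= X](bigD1 i0) //= lerDr.
by rewrite sumr_const card_ord -mulrA mulr_natl.
Qed.

End Posterior.

Section SampleSize.
Variables (R : realType) (n : nat) (d eps p1 : R).
Hypotheses (n_ge2 : (2 <= n)%N) (d_gt0 : 0 < d) (eps_gt0 : 0 < eps) (eps_lt1 : eps < 1).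
Hypotheses (p1_gt0 : 0 < p1) (p1_le1 : p1 <= 1).

Let eps_p1_le1 : eps * p1 <= 1.
Proof. by rewrite mulr_ile1 ?(ltW eps_gt0) ?(ltW eps_lt1) ?(ltW p1_gt0). Qed.

Definition budget (k : nat) : R := eps / k.+1%:R - eps / k.+2%:R.

Lemma budget_ge0 k : 0 <= budget k.
Proof.
by rewrite subr_ge0 ler_pM2l // lef_pV2 ?posrE ?ltr0Sn // ler_nat.
Qed.

Lemma budget_le1 k : budget k <= 1.
Proof.
apply: le_trans (ltW eps_lt1); apply: le_trans (_ : eps / k.+1%:R <= _).
  by rewrite gerBl divr_ge0 ?ler0n ?(ltW eps_gt0).
by rewrite ler_pdivrMr ?ltr0Sn // ler_peMr ?ler1n ?(ltW eps_gt0).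
Qed.

Lemma sum_budget t : \sum_(k < t) budget k = eps - eps / t.+1%:R.
Proof.
rewrite -(big_mkord xpredT) (@telescope_sumr_eq _ _ _ (fun k => - (eps / k.+1%:R))) //.
  by rewrite divr1 opprK addrC.
by move=> k _; rewrite /budget opprK addrC.
Qed.

Lemma expR_msize_le t : (1 <= t)%N ->
  expR (- d ^+ 2 / 2) ^+ msize n d eps p1 t <= (eps * p1 / (n%:R * t%:R)) ^+ 2.
Proof.
move=> t_ge1.
have N_ge1 : 1 <= n%:R :> R by rewrite ler1n ltnW.
have T_ge1 : 1 <= t%:R :> R by rewrite ler1n.
have ep_gt0 : 0 < eps * p1 by rewrite mulr_gt0.
set X := n%:R * t%:R / (eps * p1).
have X_ge1 : 1 <= X.
  by rewrite /X ler_pdivlMr // mul1r (le_trans eps_p1_le1) ?mulr_ege1.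
have lnX_ge0 := ln_ge0 X_ge1.
set m := msize n d eps p1 t.
have m_ge : 4 * ln X <= m%:R * d ^+ 2.
  have coef_ge0 : 0 <= 4 / d ^+ 2 * ln X by rewrite mulr_ge0 ?divr_ge0 ?sqr_ge0.
  rewrite -ler_pdivrMr ?exprn_gt0 // mulrAC.
  by rewrite /m /msize -/X natr_absz ger0_norm ?ceil_ge // ceil_ge0 (lt_le_trans _ coef_ge0) ?ltrN10.
have -> : eps * p1 / (n%:R * t%:R) = expR (- ln X).
  by rewrite expRN lnK ?posrE ?(lt_le_trans ltr01) // /X invf_div.
rewrite -!expRM_natl ler_expR; lra.
Qed.

Lemma msize_le_budget k :
  n%:R * expR (- d ^+ 2 / 2) ^+ msize n d eps p1 k.+1 / p1 <= budget k.
Proof.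
have N_ge2 : 2 <= n%:R :> R by rewrite (ler_nat R 2 n).
have T_ge0 : 0 <= k%:R :> R by exact: ler0n.
apply: le_trans (_ : n%:R * (eps * p1 / (n%:R * k.+1%:R)) ^+ 2 / p1 <= _).
  rewrite ler_wpM2r ?invr_ge0 ?(ltW p1_gt0) //.
  by rewrite ler_wpM2l ?ler0n ?expR_msize_le.
rewrite /budget -!natr1.
set N := n%:R in N_ge2 *; set T := k%:R in T_ge0 *.
have -> : N * (eps * p1 / (N * (T + 1))) ^+ 2 / p1 = eps * (eps * p1) / (N * (T + 1) ^+ 2).
  by field; rewrite !gt_eqF //; lra.
have -> : eps / (T + 1) - eps / (T + 1 + 1) = eps / ((T + 1) * (T + 2)).
  by field; rewrite !gt_eqF //; lra.
rewrite ler_pdivrMr; last by rewrite mulr_gt0 ?exprn_gt0 //; lra.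
rewrite mulrAC ler_pdivlMr; last by rewrite mulr_gt0 //; lra.
rewrite -mulrA ler_pM2l //.
apply: le_trans (_ : (T + 1) * (T + 2) <= _); last by nra.
by rewrite ler_piMl // mulr_ge0 //; lra.
Qed.

End SampleSize.

Theorem theorem1 (R : realType) (n s : nat)
  (h : 'I_n -> 'I_s -> R) (p : 'I_n -> R) (i0 : 'I_n)
  (Hn : (2 <= n)%N) (Hi0 : nat_of_ord i0 = 0%N)
  (Hh_nonneg : forall i x, 0 <= h i x)
  (Hh_sum : forall i, \sum_(x < s) h i x = 1)
  (Hh_distinct : forall i j, i != j -> exists x, h i x != h j x)
  (Hp_pos : forall i, 0 < p i)
  (Hp_sum : \sum_(i < n) p i = 1)
  (eps : R) (Heps0 : 0 < eps) (Heps1 : eps < 1) :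
  forall t : nat, (1 <= t)%N ->
    1 - eps <= hvec h p (msize n (dmin h i0) eps (p i0)) i0 t i0.
Proof.
move=> t _.
have h_sep j : j != i0 -> exists x, h i0 x != h j x.
  by move=> ji; apply: Hh_distinct; rewrite eq_sym.
have dmin_pos := dmin_gt0 Hh_nonneg Hh_sum h_sep.
have p_i0_le1 := p_le1 Hp_pos Hp_sum i0.
set msz := msize n _ eps _; set b := budget eps.
have trans_ge k : 1 - b k <= trans h p (msz k.+1) i0 i0.
  have := one_sub_trans_le_dmin Hh_nonneg Hh_sum Hp_pos Hp_sum (msz k.+1) h_sep.
  have := msize_le_budget Hn dmin_pos Heps0 Heps1 (Hp_pos i0) p_i0_le1 k.
  rewrite -/msz -/b; lra.
apply: le_trans (hvec_ge_prod Hh_nonneg Hp_pos msz i0 t).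
apply: le_trans (_ : \prod_(k < t) (1 - b k) <= _); last first.
  by apply: ler_prod => k _; rewrite trans_ge andbT subr_ge0 budget_le1.
apply: le_trans (prod_1B_ge _ _); last by move=> k _; rewrite budget_ge0 ?budget_le1.
by rewrite sum_budget lerB // gerBl divr_ge0 ?ltW.
Qed.
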